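(* Let $\theta$ be a well-founded tree and let $Y$ be an infinite dimensional closed subspace of $Y_G(\theta)$. Then there is a normalized sequence $(y_i)_{i\in\mathbb{N}}$ in $Y$ equivalent to the unit vector basis of $c_0$, and a sequence $(g_i)_{i\in\mathbb{N}}$ in $G(\theta)$ such that $g_i<g_{i+1}$ for all $i$, $g_i(y_i)>\frac12$ for all $i$, and $|g_i(y_k)|<2^{-(k+2)}$ for all $i\neq k$.
   Context: Fix a compatible enumeration $(s_n)$ of $\mathbb{N}^{<\mathbb{N}}$ (bijective, $s_n\preceq s_m\Rightarrow n\le m$, $\preceq$ the extension order); $(e_s)$ is the unit vector basis of $c_{00}(\mathbb{N}^{<\mathbb{N}})$, and for $x,g\in c_{00}(\mathbb{N}^{<\mathbb{N}})$, $g(x)=\sum_sg(s)x(s)$. For a tree $\theta$, $G(\theta)=\{\sum_{i=1}^n a_ie_{t_i}: n\in\mathbb{N},\ t_1\prec t_2\prec\dots\prec t_n\in\theta,\ |a_i|=1\}$. $Y_G(\theta)$ is the completion of $c_{00}(\theta)$ under $\|x\|_G=\sup\{g(x):g\in G(\theta)\}$ (equivalently, the sup over segments $I$ of $\theta$ of $\sum_{s\in I}|x(s)|$); each $g\in G(\theta)$ extends to a norm-at-most-one functional on $Y_G(\theta)$. For $g,g'\in c_{00}$, $g<g'$ means every index $n$ with $s_n$ in the support of $g$ is less than every index with $s_n$ in the support of $g'$. A tree is well-founded if it has no infinite branch. *)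

From Stdlib Require Import Reals List.
Import ListNotations.
Open Scope R_scope.

Definition node := list nat.

Definition prefix (s t : node) : Prop := exists u, t = s ++ u.
Definition sprefix (s t : node) : Prop := exists u, u <> [] /\ t = s ++ u.

Definition compatible_enum (enum : nat -> node) (idx : node -> nat) : Prop :=
  (forall n, idx (enum n) = n) /\ (forall s, enum (idx s) = s) /\
  (forall n m, prefix (enum n) (enum m) -> (n <= m)%nat).

Definition is_tree (theta : node -> Prop) : Prop :=
  forall s t, prefix s t -> theta t -> theta s.

Definition well_founded_tree (theta : node -> Prop) : Prop :=
  ~ exists sigma : nat -> nat, forall n, theta (map sigma (seq 0 n)).

Fixpoint chain_step (l : list node) : Prop :=
  match l with
  | [] => True
  | t :: l' => match l' with
               | [] => True
               | t' :: _ => sprefix t t' /\ chain_step l'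
               end
  end.
Definition is_chain (theta : node -> Prop) (l : list node) : Prop :=
  Forall theta l /\ chain_step l.

Definition vec := node -> R.

Definition vsub (x y : vec) : vec := fun s => x s - y s.

Fixpoint sumN (n : nat) (f : nat -> R) : R :=
  match n with O => 0 | S k => sumN k f + f k end.

Fixpoint maxabsN (n : nat) (a : nat -> R) : R :=
  match n with O => 0 | S k => Rmax (maxabsN k a) (Rabs (a k)) end.

Definition lincomb (n : nat) (a : nat -> R) (y : nat -> vec) : vec :=
  fun s => sumN n (fun i => a i * y i s).

Definition chain_sum (x : vec) (l : list node) : R :=
  fold_right (fun t acc => Rabs (x t) + acc) 0 l.

(* ||x||_G <= M, where ||x||_G = sup over (finite) segments of theta of the
   sum of |x(s)|, equivalently sup over g in G(theta) of g(x). *)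
Definition norm_le (theta : node -> Prop) (x : vec) (M : R) : Prop :=
  forall l, is_chain theta l -> chain_sum x l <= M.

Definition norm_ge (theta : node -> Prop) (x : vec) (c : R) : Prop :=
  forall M, norm_le theta x M -> c <= M.

Definition tail_proj (idx : node -> nat) (n : nat) (x : vec) : vec :=
  fun s => if Nat.ltb (idx s) n then 0 else x s.

(* Y_G(theta) = completion of c00(theta) under ||.||_G, realised concretely as
   those x supported in theta that are norm limits of their initial
   projections P_n x (P_n = restriction to {s_0,...,s_{n-1}}). *)
Definition in_YG (theta : node -> Prop) (idx : node -> nat) (x : vec) : Prop :=
  (forall s, ~ theta s -> x s = 0) /\
  (forall eps, 0 < eps -> exists N, forall n, (N <= n)%nat ->
       norm_le theta (tail_proj idx n x) eps).

Definition closed_subspace (theta : node -> Prop) (idx : node -> nat)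
    (Y : vec -> Prop) : Prop :=
  (forall x, Y x -> in_YG theta idx x) /\
  Y (fun _ => 0) /\
  (forall x y, Y x -> Y y -> Y (fun s => x s + y s)) /\
  (forall c x, Y x -> Y (fun s => c * x s)) /\
  (forall x, in_YG theta idx x ->
     (forall eps, 0 < eps -> exists y, Y y /\ norm_le theta (vsub x y) eps) ->
     Y x).

Definition infinite_dimensional (Y : vec -> Prop) : Prop :=
  forall n, exists y : nat -> vec, (forall i, (i < n)%nat -> Y (y i)) /\
    (forall a : nat -> R, (forall s, lincomb n a y s = 0) ->
       forall i, (i < n)%nat -> a i = 0).

(* Elements of G(theta): lists of (coefficient, node) pairs
   [(a_1,t_1);...;(a_n,t_n)] with t_1 ≺ ... ≺ t_n in theta and |a_i| = 1,
   representing sum a_i e_{t_i}. *)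
Definition in_G (theta : node -> Prop) (g : list (R * node)) : Prop :=
  is_chain theta (map snd g) /\ Forall (fun p => Rabs (fst p) = 1) g.

Definition gapply (g : list (R * node)) (x : vec) : R :=
  fold_right (fun p acc => fst p * x (snd p) + acc) 0 g.

Definition glt (idx : node -> nat) (g g' : list (R * node)) : Prop :=
  forall p p', In p g -> In p' g' -> fst p <> 0 -> fst p' <> 0 ->
    (idx (snd p) < idx (snd p'))%nat.

Definition normalized (theta : node -> Prop) (x : vec) : Prop :=
  norm_le theta x 1 /\ norm_ge theta x 1.

Definition equiv_c0_basis (theta : node -> Prop) (y : nat -> vec) : Prop :=
  exists A B, 0 < A /\ 0 < B /\
    forall (n : nat) (a : nat -> R),
      norm_ge theta (lincomb n a y) (A * maxabsN n a) /\
      norm_le theta (lincomb n a y) (B * maxabsN n a).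

From Stdlib Require Import Reals List Lra Lia ClassicalEpsilon FunctionalExtensionality Classical.
Import ListNotations.
Open Scope R_scope.

(* Call a region of the tree tail normalizable if [Y] has vectors of norm one on it with
   arbitrarily small initial part, and let a c_0 sequence on it be a sequence in [Y], of norm one on
   the region and null on every initial part, all of whose subsequences satisfy an upper c_0
   estimate on the region.  For the region below an antichain [ts] there is a dichotomy.  Either
   such vectors can also be taken negligible on the front through the first [n] children of [ts],
   for every [n]; then a diagonal choice puts the k-th vector essentially on its own band of
   children, and bands meet every chain at most once, which is the upper c_0 estimate.  Or the
   region is controlled by the region below the first [n] children of [ts] for one [n], and both
   properties transfer between the two regions.  The whole tree is tail normalizable because [Y] is
   infinite dimensional.  If it carried no c_0 sequence, iterating the dichotomy would produce
   finitely branching levels whose regions are never empty, hence by Koenig's lemma an infinite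
   branch.  A gliding hump along the c_0 sequence finally yields the functionals, supported on
   consecutive windows of the enumeration; they also give the lower c_0 estimate. *)

Lemma dependent_choice {T : Type} (Inv : nat -> T -> Prop) (P : nat -> T -> T -> Prop) (x0 : T) :
  Inv O x0 -> (forall i x, Inv i x -> exists x', Inv (S i) x' /\ P i x x') ->
  exists f : nat -> T, f O = x0 /\ forall i, Inv i (f i) /\ P i (f i) (f (S i)).
Proof.
  intros H0 Hstep.
  pose (next i (x : {x | Inv i x}) := constructive_indefinite_description _ (Hstep i _ (proj2_sig x))).
  pose (g := fix g i : {x | Inv i x} :=
    match i with
    | O => exist _ x0 H0
    | S i => exist _ (proj1_sig (next i (g i))) (proj1 (proj2_sig (next i (g i))))
    end).
  exists (fun i => proj1_sig (g i)). split; [reflexivity|].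
  intros i. split; [exact (proj2_sig (g i))|exact (proj2 (proj2_sig (next i (g i))))].
Qed.

Definition strictly_increasing (phi : nat -> nat) : Prop := forall i, (phi i < phi (S i))%nat.

Lemma strictly_increasing_lt phi : strictly_increasing phi ->
  forall i j, (i < j)%nat -> (phi i < phi j)%nat.
Proof. intros H i j Hij. induction Hij; [apply H|]. specialize (H m). lia. Qed.

Lemma strictly_increasing_ge phi : strictly_increasing phi -> forall i, (i <= phi i)%nat.
Proof. intros H i. induction i; [lia|]. specialize (H i). lia. Qed.

Lemma strictly_increasing_le phi : strictly_increasing phi ->
  forall i j, (i <= j)%nat -> (phi i <= phi j)%nat.
Proof.
  intros H i j Hij. destruct (Nat.eq_dec i j) as [->|Hne]; [lia|].
  pose proof (strictly_increasing_lt phi H i j ltac:(lia)). lia.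
Qed.

Lemma strictly_increasing_inj phi : strictly_increasing phi -> forall i j, phi i = phi j -> i = j.
Proof.
  intros H i j E. destruct (Nat.lt_trichotomy i j) as [L|[L|L]]; auto.
  - pose proof (strictly_increasing_lt phi H i j L); lia.
  - pose proof (strictly_increasing_lt phi H j i L); lia.
Qed.

Lemma pigeonhole_infinitely_often n (P : nat -> nat -> Prop) :
  (forall c j j', (j' <= j)%nat -> P c j -> P c j') ->
  (forall j, exists c, (c < n)%nat /\ P c j) -> exists c, (c < n)%nat /\ forall j, P c j.
Proof.
  induction n; intros Hmono H.
  - destruct (H O) as [c [Hc _]]. lia.
  - destruct (classic (forall j, P n j)) as [Hn|Hn]; [exists n; split; auto|].
    apply not_all_ex_not in Hn. destruct Hn as [j0 Hj0].
    destruct IHn as [c [Hc Hc']]; auto.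
    + intros j. destruct (H (Nat.max j j0)) as [c [Hc Hp]].
      destruct (Nat.eq_dec c n) as [->|Hne].
      * exfalso. apply Hj0. apply (Hmono n (Nat.max j j0)); auto; lia.
      * exists c. split; [lia|]. apply (Hmono c (Nat.max j j0)); auto; lia.
    + exists c. split; auto.
Qed.

Lemma prefix_refl s : prefix s s.
Proof. exists []. now rewrite app_nil_r. Qed.

Lemma prefix_trans a b c : prefix a b -> prefix b c -> prefix a c.
Proof. intros [u ->] [v ->]. exists (u ++ v). now rewrite app_assoc. Qed.

Lemma prefix_app a u : prefix a (a ++ u).
Proof. now exists u. Qed.

Lemma sprefix_prefix a b : sprefix a b -> prefix a b.
Proof. intros [u [_ ->]]. now exists u. Qed.

Lemma sprefix_trans a b c : sprefix a b -> sprefix b c -> sprefix a c.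
Proof.
  intros [u [Hu ->]] [v [Hv ->]]. exists (u ++ v). split.
  - destruct u; [congruence|discriminate].
  - now rewrite app_assoc.
Qed.

Lemma sprefix_irrefl a : ~ sprefix a a.
Proof.
  intros [u [Hu E]]. apply (f_equal (@length nat)) in E.
  rewrite length_app in E. destruct u; [congruence|simpl in E; lia].
Qed.

Lemma prefix_total a b c : prefix a c -> prefix b c -> prefix a b \/ prefix b a.
Proof.
  revert b c. induction a as [|x a IH]; intros b c Ha Hb.
  - left. now exists b.
  - destruct b as [|y b].
    + right. now exists (x :: a).
    + destruct Ha as [u Hu], Hb as [v Hv]. subst c.
      simpl in Hv. injection Hv as -> Hv.
      destruct (IH b (a ++ u)) as [[w ->]|[w ->]].
      * apply prefix_app.
      * now exists v.
      * left. exists w. reflexivity.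
      * right. exists w. reflexivity.
Qed.

Lemma prefix_snoc_inj t c c' s : prefix (t ++ [c]) s -> prefix (t ++ [c']) s -> c = c'.
Proof.
  intros [u Hu] [v Hv]. subst s. rewrite <- !app_assoc in Hv.
  apply app_inv_head in Hv. simpl in Hv. now injection Hv.
Qed.

Lemma chain_step_tail t l : chain_step (t :: l) -> chain_step l.
Proof. destruct l; simpl; tauto. Qed.

Lemma chain_step_head t l : chain_step (t :: l) -> forall s, In s l -> sprefix t s.
Proof.
  revert t. induction l as [|a l IH]; intros t H s Hs; [destruct Hs|].
  destruct H as [H1 H2]. destruct Hs as [<-|Hs]; [exact H1|].
  apply sprefix_trans with a; [exact H1|]. now apply IH.
Qed.

Lemma chain_comparable l : chain_step l -> forall s s', In s l -> In s' l ->
  prefix s s' \/ prefix s' s.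
Proof.
  induction l as [|a l IH]; intros H s s' Hs Hs'; [destruct Hs|].
  pose proof (chain_step_head _ _ H) as Hh.
  destruct Hs as [<-|Hs]; destruct Hs' as [<-|Hs'].
  - left; apply prefix_refl.
  - left. apply sprefix_prefix. now apply Hh.
  - right. apply sprefix_prefix. now apply Hh.
  - apply IH; auto. now apply chain_step_tail with a.
Qed.

Lemma chain_step_filter (f : node -> bool) l : chain_step l -> chain_step (filter f l).
Proof.
  induction l as [|a l IH]; intros H; [exact I|].
  pose proof (chain_step_head _ _ H) as Hh.
  specialize (IH (chain_step_tail _ _ H)).
  simpl. destruct (f a); [|exact IH].
  destruct (filter f l) as [|b l'] eqn:E; [exact I|].
  split; [|exact IH]. apply Hh.
  assert (Hb : In b (filter f l)) by (rewrite E; now left).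
  now apply filter_In in Hb.
Qed.

Lemma is_chain_filter theta (f : node -> bool) l : is_chain theta l -> is_chain theta (filter f l).
Proof.
  intros [H1 H2]. split; [|now apply chain_step_filter].
  apply Forall_forall. intros x Hx. apply filter_In in Hx. rewrite Forall_forall in H1. now apply H1.
Qed.

Lemma is_chain_nil theta : is_chain theta [].
Proof. split; [constructor|exact I]. Qed.

Lemma is_chain_single theta s : theta s -> is_chain theta [s].
Proof. intros H. split; [now constructor|exact I]. Qed.

Lemma chain_sum_cons x t l : chain_sum x (t :: l) = Rabs (x t) + chain_sum x l.
Proof. reflexivity. Qed.

Lemma chain_sum_zero l : chain_sum (fun _ => 0) l = 0.
Proof. induction l; [reflexivity|]. rewrite chain_sum_cons, IHl, Rabs_R0. lra. Qed.

Lemma chain_sum_triangle x u v l : (forall s, In s l -> Rabs (x s) <= Rabs (u s) + Rabs (v s)) ->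
  chain_sum x l <= chain_sum u l + chain_sum v l.
Proof.
  induction l as [|a l IH]; intros H; [simpl; lra|].
  rewrite !chain_sum_cons. assert (H1 := H a (or_introl eq_refl)).
  assert (chain_sum x l <= chain_sum u l + chain_sum v l) by (apply IH; intros; apply H; now right).
  lra.
Qed.

Lemma chain_sum_le x u l : (forall s, In s l -> Rabs (x s) <= Rabs (u s)) ->
  chain_sum x l <= chain_sum u l.
Proof.
  intros H. rewrite <- (Rplus_0_r (chain_sum u l)), <- (chain_sum_zero l).
  apply chain_sum_triangle. intros s Hs. rewrite Rabs_R0, Rplus_0_r. now apply H.
Qed.

Lemma chain_sum_ext x y l : (forall s, In s l -> x s = y s) -> chain_sum x l = chain_sum y l.
Proof.
  induction l as [|a l IH]; intros H; [reflexivity|].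
  rewrite !chain_sum_cons, H by now left. f_equal. apply IH. intros; apply H; now right.
Qed.

Lemma chain_sum_scale c x l : chain_sum (fun s => c * x s) l = Rabs c * chain_sum x l.
Proof. induction l; [simpl; ring|]. rewrite !chain_sum_cons, IHl, Rabs_mult. ring. Qed.

Lemma chain_sum_filter (f : node -> bool) x l :
  chain_sum x (filter f l) = chain_sum (fun s => if f s then x s else 0) l.
Proof.
  induction l as [|a l IH]; [reflexivity|]. simpl filter.
  rewrite (chain_sum_cons (fun s => if f s then x s else 0)).
  destruct (f a); [rewrite chain_sum_cons, IH; reflexivity|]. rewrite IH, Rabs_R0. ring.
Qed.

Lemma sumN_ext n f g : (forall i, (i < n)%nat -> f i = g i) -> sumN n f = sumN n g.
Proof.
  induction n; intros H; simpl; [reflexivity|].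
  rewrite IHn by (intros; apply H; lia). rewrite H by lia. reflexivity.
Qed.

Lemma sumN_le n f g : (forall i, (i < n)%nat -> f i <= g i) -> sumN n f <= sumN n g.
Proof.
  induction n; intros H; simpl; [lra|].
  assert (sumN n f <= sumN n g) by (apply IHn; intros; apply H; lia).
  assert (f n <= g n) by (apply H; lia). lra.
Qed.

Lemma sumN_plus n f g : sumN n (fun i => f i + g i) = sumN n f + sumN n g.
Proof. induction n; simpl; lra. Qed.

Lemma sumN_scal n c f : sumN n (fun i => c * f i) = c * sumN n f.
Proof. induction n; simpl; lra. Qed.

Lemma sumN_zero n : sumN n (fun _ => 0) = 0.
Proof. induction n; simpl; lra. Qed.

Lemma sumN_abs n f : Rabs (sumN n f) <= sumN n (fun i => Rabs (f i)).
Proof.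
  induction n; simpl; [rewrite Rabs_R0; lra|].
  eapply Rle_trans; [apply Rabs_triang|]. lra.
Qed.

Lemma sumN_split n j x : (j < n)%nat ->
  sumN n x = x j + sumN n (fun i => if Nat.eq_dec i j then 0 else x i).
Proof.
  induction n; intros H; [lia|]. simpl.
  destruct (Nat.eq_dec n j) as [->|Hne].
  - rewrite (sumN_ext j (fun i => if Nat.eq_dec i j then 0 else x i) x).
    + destruct (Nat.eq_dec j j); [lra|congruence].
    + intros i Hi. destruct (Nat.eq_dec i j); [lia|reflexivity].
  - rewrite IHn by lia. lra.
Qed.

Lemma maxabsN_nonneg n a : 0 <= maxabsN n a.
Proof. induction n; simpl; [lra|]. eapply Rle_trans; [exact IHn|apply Rmax_l]. Qed.

Lemma maxabsN_ge n a i : (i < n)%nat -> Rabs (a i) <= maxabsN n a.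
Proof.
  induction n; intros H; [lia|]. simpl. destruct (Nat.eq_dec i n) as [->|Hne].
  - apply Rmax_r.
  - eapply Rle_trans; [apply IHn; lia|apply Rmax_l].
Qed.

Lemma maxabsN_attained n a : (0 < n)%nat -> exists j, (j < n)%nat /\ Rabs (a j) = maxabsN n a.
Proof.
  induction n; intros H; [lia|]. simpl.
  destruct n as [|n].
  - exists O. split; [lia|]. simpl. rewrite Rmax_right; [reflexivity|apply Rabs_pos].
  - destruct (IHn ltac:(lia)) as [j [Hj E]].
    destruct (Rle_dec (maxabsN (S n) a) (Rabs (a (S n)))) as [L|L].
    + exists (S n). split; [lia|]. now rewrite Rmax_right.
    + exists j. split; [lia|]. rewrite Rmax_left; [easy|lra].
Qed.

Lemma maxabsN_le n a b : (forall i, (i < n)%nat -> Rabs (a i) <= Rabs (b i)) ->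
  maxabsN n a <= maxabsN n b.
Proof.
  induction n; intros H; simpl; [lra|].
  apply Rmax_lub.
  - eapply Rle_trans; [apply IHn; intros; apply H; lia|apply Rmax_l].
  - eapply Rle_trans; [apply H; lia|apply Rmax_r].
Qed.

Lemma maxabsN_scale_le n a c : (forall i, (i < n)%nat -> Rabs (c i) <= 1) ->
  maxabsN n (fun i => a i * c i) <= maxabsN n a.
Proof.
  intros H. apply maxabsN_le. intros i Hi. rewrite Rabs_mult.
  specialize (H i Hi). pose proof (Rabs_pos (a i)). pose proof (Rabs_pos (c i)). nra.
Qed.

Lemma Rdiv_le_of_le_mult a b c : 0 < c -> a <= b * c -> a / c <= b.
Proof.
  intros Hc H. apply Rmult_le_reg_r with c; [exact Hc|].
  unfold Rdiv. rewrite Rmult_assoc, Rinv_l; lra.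
Qed.

Lemma half_pow_pos k : 0 < (/2) ^ k.
Proof. apply pow_lt. lra. Qed.

Lemma half_pow_le k k' : (k <= k')%nat -> (/2) ^ k' <= (/2) ^ k.
Proof. intros H. induction H; [lra|]. simpl. pose proof (half_pow_pos m). lra. Qed.

Lemma half_pow_small d : 0 < d -> exists K, forall k, (K <= k)%nat -> (/2) ^ k < d.
Proof.
  intros Hd. assert (Rabs (/2) < 1) by (rewrite Rabs_right; lra).
  destruct (pow_lt_1_zero (/2) H d Hd) as [K HK]. exists K. intros k Hk.
  specialize (HK k Hk). rewrite Rabs_right in HK; [exact HK|]. left; apply half_pow_pos.
Qed.

Lemma sumN_half_pow n : sumN n (fun i => (/2) ^ (S i)) = 1 - (/2) ^ n.
Proof.
  induction n; [simpl; lra|].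
  change (sumN (S n) (fun i => (/2) ^ (S i))) with (sumN n (fun i => (/2) ^ (S i)) + (/2) ^ (S n)).
  rewrite IHn. simpl. lra.
Qed.

Lemma sumN_weighted_half_pow n a :
  sumN n (fun i => Rabs (a i) * (/2) ^ (S i)) <= maxabsN n a.
Proof.
  apply Rle_trans with (sumN n (fun i => maxabsN n a * (/2) ^ (S i))).
  - apply sumN_le. intros i Hi. apply Rmult_le_compat_r; [left; apply half_pow_pos|].
    now apply maxabsN_ge.
  - rewrite sumN_scal, sumN_half_pow.
    pose proof (maxabsN_nonneg n a). pose proof (half_pow_pos n). nra.
Qed.

Section GNorm.
Variable theta : node -> Prop.

Lemma norm_le_nonneg x M : norm_le theta x M -> 0 <= M.
Proof. intros H. specialize (H [] (is_chain_nil theta)). simpl in H. lra. Qed.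

Lemma norm_le_weaken x M M' : norm_le theta x M -> M <= M' -> norm_le theta x M'.
Proof. intros H HM l Hl. specialize (H l Hl). lra. Qed.

Lemma norm_le_triangle x u v M1 M2 :
  (forall s, theta s -> Rabs (x s) <= Rabs (u s) + Rabs (v s)) ->
  norm_le theta u M1 -> norm_le theta v M2 -> norm_le theta x (M1 + M2).
Proof.
  intros H H1 H2 l Hl. apply Rle_trans with (chain_sum u l + chain_sum v l).
  - apply chain_sum_triangle. intros s Hs. apply H.
    destruct Hl as [Hf _]. rewrite Forall_forall in Hf. now apply Hf.
  - specialize (H1 l Hl). specialize (H2 l Hl). lra.
Qed.

Lemma norm_le_dominated x u M : (forall s, theta s -> Rabs (x s) <= Rabs (u s)) ->
  norm_le theta u M -> norm_le theta x M.
Proof.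
  intros H H1 l Hl. apply Rle_trans with (chain_sum u l); [|now apply H1].
  apply chain_sum_le. intros s Hs. apply H.
  destruct Hl as [Hf _]. rewrite Forall_forall in Hf. now apply Hf.
Qed.

Lemma norm_le_scale c x M : norm_le theta x M -> norm_le theta (fun s => c * x s) (Rabs c * M).
Proof.
  intros H l Hl. rewrite chain_sum_scale.
  apply Rmult_le_compat_l; [apply Rabs_pos|now apply H].
Qed.

Lemma norm_le_scale_inv r x M : 0 < r -> norm_le theta x M -> norm_le theta (fun s => / r * x s) (M / r).
Proof.
  intros Hr H. replace (M / r) with (Rabs (/ r) * M).
  - now apply norm_le_scale.
  - rewrite Rabs_right by (left; apply Rinv_0_lt_compat, Hr). unfold Rdiv. ring.
Qed.

Lemma norm_le_zero M : 0 <= M -> norm_le theta (fun _ => 0) M.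
Proof. intros HM l Hl. now rewrite chain_sum_zero. Qed.

Lemma norm_le_lincomb n a v M : (forall i, (i < n)%nat -> norm_le theta (v i) (M i)) ->
  norm_le theta (lincomb n a v) (sumN n (fun i => Rabs (a i) * M i)).
Proof.
  induction n; intros H.
  - apply norm_le_zero. simpl. lra.
  - apply norm_le_triangle with (lincomb n a v) (fun s => a n * v n s).
    + intros s _. apply Rabs_triang.
    + apply IHn. intros; apply H; lia.
    + apply norm_le_scale. apply H. lia.
Qed.

Definition norm_bounded (x : vec) : Prop := exists M, norm_le theta x M.

Definition chain_sums (x : vec) (r : R) : Prop := exists l, is_chain theta l /\ r = chain_sum x l.

Lemma chain_sums_bound x : norm_bounded x -> bound (chain_sums x).
Proof. intros [M HM]. exists M. intros r [l [Hl ->]]. now apply HM. Qed.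

Lemma chain_sums_inhabited x : exists r, chain_sums x r.
Proof. exists 0, []. split; [apply is_chain_nil|reflexivity]. Qed.

(* The value is junk (0) on unbounded vectors. *)
Definition gnorm (x : vec) : R :=
  match excluded_middle_informative (norm_bounded x) with
  | left H => proj1_sig (completeness _ (chain_sums_bound x H) (chain_sums_inhabited x))
  | right _ => 0
  end.

Lemma gnorm_lub x : norm_bounded x -> is_lub (chain_sums x) (gnorm x).
Proof.
  intros H. unfold gnorm. destruct excluded_middle_informative; [|contradiction].
  apply proj2_sig.
Qed.

Lemma norm_le_gnorm x : norm_bounded x -> norm_le theta x (gnorm x).
Proof. intros H l Hl. apply (proj1 (gnorm_lub x H)). now exists l. Qed.

Lemma gnorm_least x M : norm_le theta x M -> gnorm x <= M.
Proof.
  intros H. apply (proj2 (gnorm_lub x (ex_intro _ M H))).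
  intros r [l [Hl ->]]. now apply H.
Qed.

Lemma norm_bounded_dominated x u : (forall s, theta s -> Rabs (x s) <= Rabs (u s)) ->
  norm_bounded u -> norm_bounded x.
Proof. intros H [M HM]. exists M. now apply norm_le_dominated with u. Qed.

Lemma gnorm_dominated x u : (forall s, theta s -> Rabs (x s) <= Rabs (u s)) ->
  norm_bounded u -> gnorm x <= gnorm u.
Proof.
  intros H B. apply gnorm_least. apply norm_le_dominated with u; [exact H|now apply norm_le_gnorm].
Qed.

Lemma norm_bounded_triangle x u v : (forall s, theta s -> Rabs (x s) <= Rabs (u s) + Rabs (v s)) ->
  norm_bounded u -> norm_bounded v -> norm_bounded x.
Proof. intros H [M1 H1] [M2 H2]. exists (M1 + M2). now apply norm_le_triangle with u v. Qed.

Lemma gnorm_normalized x : normalized theta x -> gnorm x = 1.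
Proof.
  intros [H1 H2]. apply Rle_antisym; [now apply gnorm_least|].
  apply H2, norm_le_gnorm. now exists 1.
Qed.

Lemma normalized_scale_inv x : norm_bounded x -> 0 < gnorm x ->
  normalized theta (fun s => / gnorm x * x s).
Proof.
  intros B Hx. set (r := gnorm x) in *. split.
  - replace 1 with (Rabs (/ r) * r) by (rewrite Rabs_right; [field|left; apply Rinv_0_lt_compat]; lra).
    apply norm_le_scale. now apply norm_le_gnorm.
  - intros M HM. apply norm_le_scale with (c := r) in HM.
    assert (Hx' : norm_le theta x (Rabs r * M)).
    { apply norm_le_dominated with (fun s => r * (/ r * x s)); [|exact HM].
      intros s _. right. f_equal. field. lra. }
    apply gnorm_least in Hx'. fold r in Hx'. rewrite Rabs_right in Hx' by lra.
    apply Rmult_le_reg_l with r; lra.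
Qed.

End GNorm.

Definition restrict (P : node -> Prop) (x : vec) : vec :=
  fun s => if excluded_middle_informative (P s) then x s else 0.

Definition head_proj (idx : node -> nat) (N : nat) (x : vec) : vec :=
  fun s => if Nat.ltb (idx s) N then x s else 0.

Definition point_proj (s0 : node) (x : vec) : vec :=
  fun s => if list_eq_dec Nat.eq_dec s s0 then x s else 0.

Lemma restrict_in (P : node -> Prop) x s : P s -> restrict P x s = x s.
Proof. unfold restrict. destruct excluded_middle_informative; tauto. Qed.

Lemma restrict_out (P : node -> Prop) x s : ~ P s -> restrict P x s = 0.
Proof. unfold restrict. destruct excluded_middle_informative; tauto. Qed.

Lemma restrict_abs_le P x s : Rabs (restrict P x s) <= Rabs (x s).
Proof.
  unfold restrict. destruct excluded_middle_informative; [lra|rewrite Rabs_R0; apply Rabs_pos].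
Qed.

Lemma restrict_subset_abs_le (P Q : node -> Prop) x s : (forall s, P s -> Q s) ->
  Rabs (restrict P x s) <= Rabs (restrict Q x s).
Proof.
  intros H. unfold restrict at 1. destruct excluded_middle_informative as [Hp|].
  - unfold restrict. destruct excluded_middle_informative; [lra|]. exfalso; auto.
  - rewrite Rabs_R0. apply Rabs_pos.
Qed.

Lemma restrict_scale P c x : restrict P (fun s => c * x s) = (fun s => c * restrict P x s).
Proof.
  apply functional_extensionality. intros s. unfold restrict. destruct excluded_middle_informative; ring.
Qed.

Lemma restrict_lincomb P n a v :
  restrict P (lincomb n a v) = lincomb n a (fun i => restrict P (v i)).
Proof.
  apply functional_extensionality. intros s.
  unfold restrict, lincomb. destruct excluded_middle_informative; [reflexivity|].
  rewrite (sumN_ext _ _ (fun _ => 0)); [now rewrite sumN_zero|]. intros; lra.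
Qed.

Lemma head_proj_mono_abs idx N N' x s : (N <= N')%nat ->
  Rabs (head_proj idx N x s) <= Rabs (head_proj idx N' x s).
Proof.
  intros H. unfold head_proj. destruct (Nat.ltb (idx s) N) eqn:E1.
  - apply Nat.ltb_lt in E1. replace (Nat.ltb (idx s) N') with true; [lra|].
    symmetry; apply Nat.ltb_lt; lia.
  - rewrite Rabs_R0. apply Rabs_pos.
Qed.

Lemma head_proj_weaken theta idx N N' x M : (N <= N')%nat ->
  norm_le theta (head_proj idx N' x) M -> norm_le theta (head_proj idx N x) M.
Proof. intros H. apply norm_le_dominated. intros; now apply head_proj_mono_abs. Qed.

Lemma head_tail_abs idx N x s : Rabs (x s) <= Rabs (head_proj idx N x s) + Rabs (tail_proj idx N x s).
Proof. unfold head_proj, tail_proj. destruct Nat.ltb; rewrite Rabs_R0; lra. Qed.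

Lemma head_proj_scale idx N c x :
  head_proj idx N (fun s => c * x s) = (fun s => c * head_proj idx N x s).
Proof. apply functional_extensionality. intros s. unfold head_proj. destruct Nat.ltb; ring. Qed.

Lemma head_proj_lincomb idx N n a v :
  head_proj idx N (lincomb n a v) = lincomb n a (fun i => head_proj idx N (v i)).
Proof.
  apply functional_extensionality. intros s. unfold head_proj, lincomb. destruct Nat.ltb; [reflexivity|].
  rewrite (sumN_ext _ _ (fun _ => 0)); [now rewrite sumN_zero|]. intros; lra.
Qed.

Lemma norm_le_point_proj theta s0 x : norm_le theta (point_proj s0 x) (Rabs (x s0)).
Proof.
  intros l [_ Hl]. induction l as [|a l IH]; [simpl; apply Rabs_pos|].
  rewrite chain_sum_cons. unfold point_proj at 1.
  destruct (list_eq_dec Nat.eq_dec a s0) as [->|Hne].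
  - rewrite (chain_sum_ext _ (fun _ => 0)), chain_sum_zero; [lra|].
    intros s Hs. unfold point_proj. destruct list_eq_dec as [->|]; [|reflexivity].
    exfalso. apply (sprefix_irrefl s0). now apply (chain_step_head s0 l).
  - rewrite Rabs_R0, Rplus_0_l. apply IH. now apply chain_step_tail with a.
Qed.

Section Subspace.
Variable enum : nat -> node.
Variable idx : node -> nat.
Hypothesis Henum : compatible_enum enum idx.
Variable theta : node -> Prop.
Variable Y : vec -> Prop.
Hypothesis HY : closed_subspace theta idx Y.

Lemma enum_idx s : enum (idx s) = s.
Proof. apply Henum. Qed.

Lemma norm_bounded_head_proj N x : norm_bounded theta (head_proj idx N x).
Proof.
  induction N.
  - exists 0. apply norm_le_dominated with (fun _ => 0); [|apply norm_le_zero; lra].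
    intros s _. unfold head_proj. rewrite (proj2 (Nat.ltb_ge (idx s) 0)) by lia. lra.
  - apply norm_bounded_triangle with (head_proj idx N x) (point_proj (enum N) x);
      [|exact IHN|eexists; apply norm_le_point_proj].
    intros s _. unfold head_proj, point_proj.
    destruct (Nat.ltb (idx s) (S N)) eqn:E; destruct (Nat.ltb (idx s) N) eqn:E2;
    destruct (list_eq_dec Nat.eq_dec s (enum N)) as [Heq|Hne];
    rewrite ?Rabs_R0; pose proof (Rabs_pos (x s)); try lra.
    exfalso. apply Nat.ltb_lt in E. apply Nat.ltb_ge in E2. apply Hne.
    replace N with (idx s) by lia. now rewrite enum_idx.
Qed.

Lemma Y_support y s : Y y -> ~ theta s -> y s = 0.
Proof. intros H. now apply (proj1 (proj1 HY y H)). Qed.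

Lemma Y_tail_small y eps : Y y -> 0 < eps -> exists N, forall n, (N <= n)%nat ->
  norm_le theta (tail_proj idx n y) eps.
Proof. intros H. now apply (proj2 (proj1 HY y H)). Qed.

Lemma Y_bounded y : Y y -> norm_bounded theta y.
Proof.
  intros H. destruct (Y_tail_small y 1 H ltac:(lra)) as [N HN].
  apply norm_bounded_triangle with (head_proj idx N y) (tail_proj idx N y).
  - intros s _. apply head_tail_abs.
  - apply norm_bounded_head_proj.
  - exists 1. apply HN. lia.
Qed.

Lemma Y_restrict_bounded P y : Y y -> norm_bounded theta (restrict P y).
Proof.
  intros H. apply norm_bounded_dominated with y; [intros; apply restrict_abs_le|now apply Y_bounded].
Qed.

Lemma Y_scale c x : Y x -> Y (fun s => c * x s).
Proof. apply (proj1 (proj2 (proj2 (proj2 HY)))). Qed.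

Lemma Y_lincomb n a v : (forall i, (i < n)%nat -> Y (v i)) -> Y (lincomb n a v).
Proof.
  induction n; intros H.
  - exact (proj1 (proj2 HY)).
  - apply (proj1 (proj2 (proj2 HY))).
    + apply IHn. intros; apply H; lia.
    + apply Y_scale. apply H. lia.
Qed.

End Subspace.

Definition region (theta : node -> Prop) (ts : list node) (s : node) : Prop :=
  theta s /\ exists t, In t ts /\ prefix t s.

Definition children (ts : list node) (n : nat) : list node :=
  flat_map (fun t => map (fun c => t ++ [c]) (seq 0 n)) ts.

Definition antichain (ts : list node) : Prop :=
  forall t t', In t ts -> In t' ts -> prefix t t' -> t = t'.

Definition front (theta : node -> Prop) (ts : list node) (n : nat) (s : node) : Prop :=
  region theta ts s /\ (In s ts \/ region theta (children ts n) s).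

Lemma in_children ts n u :
  In u (children ts n) <-> exists t c, In t ts /\ (c < n)%nat /\ u = t ++ [c].
Proof.
  unfold children. rewrite in_flat_map. split.
  - intros [t [Ht Hu]]. apply in_map_iff in Hu. destruct Hu as [c [<- Hc]].
    apply in_seq in Hc. exists t, c. repeat split; auto; lia.
  - intros [t [c [Ht [Hc ->]]]]. exists t. split; auto. apply in_map_iff. exists c.
    split; auto. apply in_seq. lia.
Qed.

Lemma region_children theta ts n s : region theta (children ts n) s <->
  theta s /\ exists t c, In t ts /\ (c < n)%nat /\ prefix (t ++ [c]) s.
Proof.
  unfold region. split.
  - intros [H1 [u [Hu Hp]]]. apply in_children in Hu. destruct Hu as [t [c [Ht [Hc ->]]]].
    split; auto. exists t, c. auto.
  - intros [H1 [t [c [Ht [Hc Hp]]]]]. split; auto. exists (t ++ [c]). split; auto.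
    apply in_children. exists t, c. auto.
Qed.

Lemma region_children_sub theta ts n s : region theta (children ts n) s -> region theta ts s.
Proof.
  intros H. apply region_children in H. destruct H as [H1 [t [c [Ht [_ Hp]]]]].
  split; auto. exists t. split; auto. apply prefix_trans with (t ++ [c]); [apply prefix_app|exact Hp].
Qed.

Lemma antichain_single t : antichain [t].
Proof. intros a b [<-|[]] [<-|[]] _. reflexivity. Qed.

Lemma antichain_prefix_eq ts t t' s : antichain ts -> In t ts -> In t' ts ->
  prefix t s -> prefix t' s -> t = t'.
Proof.
  intros H Ht Ht' Hs Hs'. destruct (prefix_total t t' s Hs Hs') as [P|P]; auto.
  symmetry; auto.
Qed.

Lemma antichain_children ts n : antichain ts -> antichain (children ts n).
Proof.
  intros H u u' Hu Hu' Hp. apply in_children in Hu, Hu'.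
  destruct Hu as [t [c [Ht [Hc ->]]]], Hu' as [t' [c' [Ht' [Hc' ->]]]].
  assert (t = t') as <-.
  { apply (antichain_prefix_eq ts t t' (t' ++ [c'])); auto; [|apply prefix_app].
    apply prefix_trans with (t ++ [c]); [apply prefix_app|exact Hp]. }
  now rewrite (prefix_snoc_inj t c c' (t ++ [c'])); [..|apply prefix_refl].
Qed.

Lemma front_mono theta ts n n' s : (n <= n')%nat -> front theta ts n s -> front theta ts n' s.
Proof.
  intros Hn [H1 [H2|H2]]; split; auto. right. apply region_children in H2. apply region_children.
  destruct H2 as [H3 [t [c [Ht [Hc Hp]]]]]. split; auto. exists t, c. repeat split; auto. lia.
Qed.

Lemma antichain_next_letter ts t t' c c' s s' : antichain ts -> In t ts -> In t' ts ->
  prefix (t ++ [c]) s -> prefix (t' ++ [c']) s' -> prefix s s' -> c = c'.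
Proof.
  intros Hanti Ht Ht' H1 H2 Hp.
  assert (H1' : prefix (t ++ [c]) s') by (apply prefix_trans with s; auto).
  assert (t = t') as <-.
  { apply (antichain_prefix_eq ts t t' s'); auto.
    - apply prefix_trans with (t ++ [c]); [apply prefix_app|exact H1'].
    - apply prefix_trans with (t' ++ [c']); [apply prefix_app|exact H2]. }
  now apply (prefix_snoc_inj t c c' s').
Qed.

Lemma region_below_top theta ts s : region theta ts s -> ~ In s ts ->
  exists t c, In t ts /\ prefix (t ++ [c]) s /\ In c s.
Proof.
  intros [_ [t [Ht [u Hu]]]] Hn. destruct u as [|c u].
  - rewrite app_nil_r in Hu. subst. contradiction.
  - exists t, c. split; auto. split.
    + exists u. rewrite Hu, <- app_assoc. reflexivity.
    + rewrite Hu. apply in_or_app. right. now left.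
Qed.

Lemma list_idx_bound (idx : node -> nat) ts : exists N, forall t, In t ts -> (idx t < N)%nat.
Proof.
  induction ts as [|t ts [N H]]; [exists O; intros _ []|].
  exists (S (Nat.max (idx t) N)). intros t' [<-|Ht]; [lia|]. specialize (H t' Ht). lia.
Qed.

Definition tail_normalizable theta idx (Y : vec -> Prop) (Rg : node -> Prop) : Prop :=
  forall N d, 0 < d -> exists y, Y y /\ normalized theta (restrict Rg y) /\
    norm_le theta (head_proj idx N y) d.

Definition head_null theta idx (z : nat -> vec) : Prop :=
  forall N d, 0 < d -> exists K, forall k, (K <= k)%nat -> norm_le theta (head_proj idx N (z k)) d.

Definition c0_sequence_on theta idx (Y : vec -> Prop) (Rg : node -> Prop) : Prop :=
  exists (z : nat -> vec) B, (forall k, Y (z k)) /\ (forall k, normalized theta (restrict Rg (z k))) /\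
    head_null theta idx z /\
    forall n a phi, strictly_increasing phi ->
      norm_le theta (restrict Rg (lincomb n a (fun i => z (phi i)))) (B * maxabsN n a).

(* A chain meets at most one of the pairwise incomparable blocks. *)
Lemma disjoint_blocks_norm_le theta (D : nat -> node -> Prop) (u : nat -> vec) n a phi :
  (forall k k' s s', D k s -> D k' s' -> (prefix s s' \/ prefix s' s) -> k = k') ->
  (forall k, norm_le theta (restrict (D k) (u k)) 1) -> strictly_increasing phi ->
  norm_le theta (lincomb n a (fun i => restrict (D (phi i)) (u (phi i)))) (maxabsN n a).
Proof.
  intros Hdisj Hu Hphi l Hl.
  destruct (classic (exists s0 i0, In s0 l /\ (i0 < n)%nat /\ D (phi i0) s0))
    as [[s0 [i0 [Hs0 [Hi0 HD]]]]|Hno].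
  - rewrite (chain_sum_ext _ (fun s => a i0 * restrict (D (phi i0)) (u (phi i0)) s)).
    + rewrite chain_sum_scale. apply Rle_trans with (Rabs (a i0) * 1).
      * apply Rmult_le_compat_l; [apply Rabs_pos|]. now apply Hu.
      * rewrite Rmult_1_r. now apply maxabsN_ge.
    + intros s Hs. unfold lincomb. rewrite (sumN_split n i0) by exact Hi0.
      rewrite (sumN_ext _ _ (fun _ => 0)); [rewrite sumN_zero; lra|].
      intros i Hi. destruct (Nat.eq_dec i i0) as [->|Hne]; [reflexivity|].
      unfold restrict. destruct excluded_middle_informative as [Hd|]; [|lra].
      exfalso. apply Hne, (strictly_increasing_inj phi Hphi), (Hdisj _ _ s s0 Hd HD).
      destruct Hl as [_ Hc]. now apply chain_comparable with l.
  - rewrite (chain_sum_ext _ (fun _ => 0)), chain_sum_zero; [apply maxabsN_nonneg|].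
    intros s Hs. unfold lincomb. rewrite (sumN_ext _ _ (fun _ => 0)); [now rewrite sumN_zero|].
    intros i Hi. unfold restrict. destruct excluded_middle_informative as [Hd|]; [|lra].
    exfalso. apply Hno. exists s, i. auto.
Qed.

Section Front.
Variable enum : nat -> node.
Variable idx : node -> nat.
Hypothesis Henum : compatible_enum enum idx.
Variable theta : node -> Prop.
Variable Y : vec -> Prop.
Hypothesis HY : closed_subspace theta idx Y.
Variable ts : list node.

Definition beyond (n : nat) (s : node) : Prop := region theta ts s /\ ~ front theta ts n s.

Definition band (m m' : nat) (s : node) : Prop := front theta ts m' s /\ ~ front theta ts m s.

(* Only finitely many letters occur in [s_0, ..., s_(M-1)]. *)
Lemma front_exhausts M : exists n, forall s, (idx s < M)%nat -> region theta ts s -> front theta ts n s.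
Proof.
  induction M as [|M [n IH]]; [exists O; intros; lia|].
  exists (Nat.max n (S (list_max (enum M)))). intros s Hs Hr.
  destruct (Nat.eq_dec (idx s) M) as [E|E]; [|apply front_mono with n; [lia|apply IH; auto; lia]].
  split; [exact Hr|]. destruct (classic (In s ts)) as [|Hnin]; [now left|right].
  destruct (region_below_top theta ts s Hr Hnin) as [t [c [Ht [Hp Hc]]]].
  apply region_children. split; [apply Hr|]. exists t, c. repeat split; auto.
  assert (Hmax := proj1 (list_max_le s (list_max s)) (le_n _)).
  rewrite Forall_forall in Hmax. specialize (Hmax c Hc).
  rewrite <- E, (enum_idx enum idx Henum). lia.
Qed.

Lemma Y_beyond_small y d : Y y -> 0 < d ->
  exists n0, forall n, (n0 <= n)%nat -> norm_le theta (restrict (beyond n) y) d.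
Proof.
  intros Hy Hd. destruct (Y_tail_small idx theta Y HY y d Hy Hd) as [M HM].
  destruct (front_exhausts M) as [n0 Hn0]. exists n0. intros n Hn.
  apply norm_le_dominated with (tail_proj idx M y); [|apply HM; lia].
  intros s _. unfold restrict, tail_proj. destruct excluded_middle_informative as [[Hr HF]|].
  - destruct (Nat.ltb (idx s) M) eqn:E; [|lra].
    exfalso. apply HF, front_mono with n0; auto. apply Hn0; auto. now apply Nat.ltb_lt.
  - rewrite Rabs_R0. apply Rabs_pos.
Qed.

Lemma region_decompose m m' y s : (m <= m')%nat -> restrict (region theta ts) y s =
  restrict (band m m') y s + (restrict (front theta ts m) y s + restrict (beyond m') y s).
Proof.
  intros H. unfold band, beyond.
  destruct (classic (front theta ts m s)) as [F|F].
  - assert (F' := front_mono theta ts m m' s H F).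
    rewrite (restrict_in (region theta ts)) by exact (proj1 F).
    rewrite (restrict_in (front theta ts m)) by exact F.
    rewrite !restrict_out by (cbv beta; tauto). lra.
  - rewrite (restrict_out (front theta ts m)) by exact F.
    destruct (classic (front theta ts m' s)) as [F'|F'].
    + rewrite (restrict_in (region theta ts)) by exact (proj1 F').
      rewrite restrict_in by (cbv beta; tauto). rewrite restrict_out by (cbv beta; tauto). lra.
    + rewrite (restrict_out (fun s => front theta ts m' s /\ ~ front theta ts m s)) by tauto.
      destruct (classic (region theta ts s)).
      * rewrite !restrict_in by (cbv beta; tauto). lra.
      * rewrite !restrict_out by (cbv beta; tauto). lra.
Qed.

Hypothesis Hanti : antichain ts.

Lemma band_letter m m' s : band m m' s ->
  exists t c, In t ts /\ prefix (t ++ [c]) s /\ (m <= c)%nat /\ (c < m')%nat.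
Proof.
  intros [[Hr [Hin|Hx]] HnF]; [exfalso; apply HnF; split; auto|].
  apply region_children in Hx. destruct Hx as [Ht [t [c [Hin [Hc Hp]]]]].
  exists t, c. repeat split; auto.
  apply Nat.nlt_ge. intros L. apply HnF. split; auto.
  right. apply region_children. split; auto. exists t, c. auto.
Qed.

Lemma bands_incomparable ns k k' s s' : strictly_increasing ns ->
  band (ns k) (ns (S k)) s -> band (ns k') (ns (S k')) s' -> (prefix s s' \/ prefix s' s) -> k = k'.
Proof.
  intros Hns H H' Hc.
  destruct (band_letter _ _ s H) as [t [c [Ht [Hp [L1 L2]]]]].
  destruct (band_letter _ _ s' H') as [t' [c' [Ht' [Hp' [L1' L2']]]]].
  assert (c = c') as <-.
  { destruct Hc; [now apply (antichain_next_letter ts t t' c c' s s')|].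
    symmetry. now apply (antichain_next_letter ts t' t c' c s' s). }
  destruct (Nat.lt_trichotomy k k') as [L|[L|L]]; auto.
  - pose proof (strictly_increasing_le ns Hns (S k) k' L). lia.
  - pose proof (strictly_increasing_le ns Hns (S k') k L). lia.
Qed.

(* Up to errors 2^-(k+1), which sum geometrically, [y k] lives on its own band. *)
Lemma band_sequence_c0_estimate (y : nat -> vec) (ns : nat -> nat) : strictly_increasing ns ->
  (forall k, norm_le theta (restrict (region theta ts) (y k)) 1) ->
  (forall k, norm_le theta (restrict (front theta ts (ns k)) (y k)) ((/2) ^ (k + 2))) ->
  (forall k, norm_le theta (restrict (beyond (ns (S k))) (y k)) ((/2) ^ (k + 2))) ->
  forall n a phi, strictly_increasing phi ->
    norm_le theta (restrict (region theta ts) (lincomb n a (fun i => y (phi i)))) (2 * maxabsN n a).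
Proof.
  intros Hns Hy Hfront Hbeyond n a phi Hphi.
  set (err := fun i s => restrict (front theta ts (ns (phi i))) (y (phi i)) s +
                         restrict (beyond (ns (S (phi i)))) (y (phi i)) s).
  replace (2 * maxabsN n a) with (maxabsN n a + maxabsN n a) by ring.
  apply norm_le_triangle with
    (lincomb n a (fun i => restrict (band (ns (phi i)) (ns (S (phi i)))) (y (phi i))))
    (lincomb n a err).
  - intros s _. rewrite restrict_lincomb. unfold lincomb at 1. rewrite (sumN_ext _ _
      (fun i => a i * restrict (band (ns (phi i)) (ns (S (phi i)))) (y (phi i)) s + a i * err i s)).
    + rewrite sumN_plus. apply Rabs_triang.
    + intros i _. unfold err. rewrite (region_decompose (ns (phi i)) (ns (S (phi i)))); [ring|].
      apply Nat.lt_le_incl, Hns.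
  - apply disjoint_blocks_norm_le with
      (D := fun k => band (ns k) (ns (S k))) (u := y); [|intros k|exact Hphi].
    + intros. now apply (bands_incomparable ns k k' s s').
    + apply norm_le_dominated with (restrict (region theta ts) (y k)); [|apply Hy].
      intros s _. apply restrict_subset_abs_le. intros s0 [[Hr _] _]. exact Hr.
  - apply norm_le_weaken with (sumN n (fun i => Rabs (a i) * (/2) ^ (S i)));
      [|apply sumN_weighted_half_pow].
    apply norm_le_lincomb. intros i Hi.
    replace ((/2) ^ (S i)) with ((/2) ^ (i + 2) + (/2) ^ (i + 2))
      by (rewrite Nat.add_comm; simpl; field).
    assert (Hle : (/2) ^ (phi i + 2) <= (/2) ^ (i + 2))
      by (apply half_pow_le; pose proof (strictly_increasing_ge phi Hphi i); lia).
    apply norm_le_triangle with (restrict (front theta ts (ns (phi i))) (y (phi i)))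
      (restrict (beyond (ns (S (phi i)))) (y (phi i))); [intros; apply Rabs_triang| |];
      eapply norm_le_weaken; eauto.
Qed.

Definition front_negligible : Prop :=
  forall n N d, 0 < d -> exists y, Y y /\ normalized theta (restrict (region theta ts) y) /\
    norm_le theta (head_proj idx N y) d /\ norm_le theta (restrict (front theta ts n) y) d.

Lemma front_negligible_c0_sequence : front_negligible -> c0_sequence_on theta idx Y (region theta ts).
Proof.
  intros Hneg.
  set (good := fun k n y n' => Y y /\ normalized theta (restrict (region theta ts) y) /\
    norm_le theta (head_proj idx k y) ((/2) ^ (k + 2)) /\
    norm_le theta (restrict (front theta ts n) y) ((/2) ^ (k + 2)) /\ (n < n')%nat /\
    norm_le theta (restrict (beyond n') y) ((/2) ^ (k + 2))).
  destruct (dependent_choice (fun _ _ => True)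
    (fun k (p p' : vec * nat) => good k (snd p) (fst p') (snd p')) (fun _ => 0, O))
    as [f [_ Hf]]; [exact I| |].
  { intros k [y0 n] _. destruct (Hneg n k _ (half_pow_pos (k + 2))) as [y [H1 [H2 [H3 H4]]]].
    destruct (Y_beyond_small y _ H1 (half_pow_pos (k + 2))) as [n' Hn'].
    exists (y, S (Nat.max n n')). split; [exact I|].
    unfold good; simpl. split; [exact H1|]. split; [exact H2|]. split; [exact H3|].
    split; [exact H4|]. split; [lia|]. apply Hn'. lia. }
  set (z := fun k => fst (f (S k))). set (ns := fun k => snd (f k)).
  assert (Hz : forall k, good k (ns k) (z k) (ns (S k))) by (intros k; apply (Hf k)).
  exists z, 2. split; [|split; [|split]].
  - intros k. apply (Hz k).
  - intros k. apply (Hz k).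
  - intros N d Hd. destruct (half_pow_small d Hd) as [K HK]. exists (Nat.max N K). intros k Hk.
    apply head_proj_weaken with k; [lia|]. apply norm_le_weaken with ((/2) ^ (k + 2)); [apply (Hz k)|].
    apply Rle_trans with ((/2) ^ k); [apply half_pow_le; lia|]. left; apply HK; lia.
  - apply band_sequence_c0_estimate with ns; intros k; apply (Hz k).
Qed.

End Front.

Lemma head_null_fast_subsequence theta idx z : head_null theta idx z -> forall N,
  exists psi, strictly_increasing psi /\
    forall k, norm_le theta (head_proj idx N (z (psi k))) ((/2) ^ (S k)).
Proof.
  intros Hz N.
  destruct (dependent_choice (fun _ _ => True)
    (fun k p p' => (p < p')%nat /\ norm_le theta (head_proj idx N (z p')) ((/2) ^ (S k))) O)
    as [f [_ Hf]]; [exact I| |].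
  - intros k p _. destruct (Hz N _ (half_pow_pos (S k))) as [K HK].
    exists (Nat.max (S p) K). split; [exact I|]. split; [lia|]. apply HK. lia.
  - exists (fun k => f (S k)). split; [intros k; apply (Hf (S k))|]. intros k. apply (Hf k).
Qed.

Lemma norm_le_head_lincomb_fast theta idx N (v : nat -> vec) n b phi :
  (forall k, norm_le theta (head_proj idx N (v k)) ((/2) ^ (S k))) -> strictly_increasing phi ->
  norm_le theta (head_proj idx N (lincomb n b (fun i => v (phi i)))) (maxabsN n b).
Proof.
  intros Hv Hphi. rewrite head_proj_lincomb.
  apply norm_le_weaken with (sumN n (fun i => Rabs (b i) * (/2) ^ (S i)));
    [|apply sumN_weighted_half_pow].
  apply norm_le_lincomb. intros i _. apply norm_le_weaken with ((/2) ^ (S (phi i))); [apply Hv|].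
  apply half_pow_le. pose proof (strictly_increasing_ge phi Hphi i). lia.
Qed.

Lemma head_null_rescaled_subsequence theta idx z psi (c : nat -> R) : head_null theta idx z ->
  strictly_increasing psi -> (forall k, Rabs (c k) <= 1) ->
  head_null theta idx (fun k s => c k * z (psi k) s).
Proof.
  intros Hz Hpsi Hc N d Hd. destruct (Hz N d Hd) as [K HK]. exists K. intros k Hk.
  rewrite head_proj_scale. apply norm_le_weaken with (Rabs (c k) * d).
  - apply norm_le_scale, HK. pose proof (strictly_increasing_ge psi Hpsi k). lia.
  - specialize (Hc k). nra.
Qed.

Lemma lincomb_rescaled n a (c : nat -> R) (v : nat -> vec) phi :
  lincomb n a (fun i s => c (phi i) * v (phi i) s) =
  lincomb n (fun i => a i * c (phi i)) (fun i => v (phi i)).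
Proof. apply functional_extensionality. intros s. unfold lincomb. apply sumN_ext. intros. ring. Qed.

Section Children.
Variable enum : nat -> node.
Variable idx : node -> nat.
Hypothesis Henum : compatible_enum enum idx.
Variable theta : node -> Prop.
Variable Y : vec -> Prop.
Hypothesis HY : closed_subspace theta idx Y.
Variable ts : list node.

Definition controlled_by_children (n N1 : nat) (d0 : R) : Prop :=
  0 < d0 /\ forall y M1 M2, Y y ->
    norm_le theta (restrict (region theta (children ts n)) y) M1 ->
    norm_le theta (head_proj idx N1 y) M2 ->
    norm_le theta (restrict (region theta ts) y) ((M1 + M2) / d0).

Lemma front_abs_le n Nt x s : (forall t, In t ts -> (idx t < Nt)%nat) ->
  Rabs (restrict (front theta ts n) x s) <=
  Rabs (restrict (region theta (children ts n)) x s) + Rabs (head_proj idx Nt x s).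
Proof.
  intros HNt. pose proof (Rabs_pos (restrict (region theta (children ts n)) x s)).
  pose proof (Rabs_pos (head_proj idx Nt x s)).
  destruct (classic (front theta ts n s)) as [[Hr [Hin|Hc]]|F].
  - unfold head_proj. rewrite restrict_in by (split; [|left]; auto).
    rewrite (proj2 (Nat.ltb_lt (idx s) Nt)) by now apply HNt. lra.
  - rewrite (restrict_in (front theta ts n)) by (split; [|right]; auto).
    rewrite restrict_in by exact Hc. lra.
  - rewrite restrict_out, Rabs_R0 by exact F. lra.
Qed.

(* Normalizing a vector violating the bound gives a vector with small head and small front,
   since the front lies in the children's region plus a head containing [ts]. *)
Lemma not_front_negligible_controlled :
  ~ front_negligible idx theta Y ts -> exists n N1 d0, controlled_by_children n N1 d0.
Proof.
  intros Hneg.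
  assert (Hbad : exists n N0 d0, 0 < d0 /\ forall y, Y y ->
    normalized theta (restrict (region theta ts) y) -> norm_le theta (head_proj idx N0 y) d0 ->
    ~ norm_le theta (restrict (front theta ts n) y) d0).
  { apply NNPP. intros Hc. apply Hneg. intros n N d Hd. apply NNPP. intros Hy.
    apply Hc. exists n, N, d. split; auto. intros y H1 H2 H3 H4. apply Hy. exists y. auto. }
  destruct Hbad as [n [N0 [d0 [Hd0 Hbad]]]].
  destruct (list_idx_bound idx ts) as [Nt HNt].
  exists n, (Nat.max N0 Nt), d0. split; [exact Hd0|]. intros y M1 M2 Hy H1 H2.
  assert (Hfront : norm_le theta (restrict (front theta ts n) y) (M1 + M2)).
  { apply norm_le_triangle with (restrict (region theta (children ts n)) y) (head_proj idx Nt y);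
      [intros; now apply front_abs_le|exact H1|].
    apply head_proj_weaken with (Nat.max N0 Nt); [lia|exact H2]. }
  assert (HM := norm_le_nonneg _ _ _ H1). assert (HM2 := norm_le_nonneg _ _ _ H2).
  assert (By := Y_restrict_bounded enum idx Henum theta Y HY (region theta ts) y Hy).
  set (r := gnorm theta (restrict (region theta ts) y)).
  apply norm_le_weaken with r; [now apply norm_le_gnorm|].
  apply Rnot_lt_le. intros Hlt. apply Rmult_lt_compat_l with (r := d0) in Hlt; [|exact Hd0].
  replace (d0 * ((M1 + M2) / d0)) with (M1 + M2) in Hlt by (field; lra).
  assert (Hr : 0 < r) by nra.
  apply (Hbad (fun s => / r * y s)).
  - now apply (Y_scale idx theta Y HY).
  - rewrite restrict_scale. now apply normalized_scale_inv.
  - rewrite head_proj_scale. apply norm_le_weaken with (M2 / r).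
    + apply norm_le_scale_inv; [exact Hr|]. apply head_proj_weaken with (Nat.max N0 Nt); [lia|exact H2].
    + apply Rdiv_le_of_le_mult; lra.
  - rewrite restrict_scale. apply norm_le_weaken with ((M1 + M2) / r).
    + now apply norm_le_scale_inv.
    + apply Rdiv_le_of_le_mult; lra.
Qed.

Section Controlled.
Variables (n N1 : nat) (d0 : R).
Hypothesis Hctrl : controlled_by_children n N1 d0.

Lemma children_tail_normalizable : tail_normalizable theta idx Y (region theta ts) ->
  tail_normalizable theta idx Y (region theta (children ts n)).
Proof.
  intros HT N d Hd. destruct Hctrl as [Hd0 Hc].
  set (e := d0 / 2 * Rmin 1 d).
  assert (He : 0 < e) by (apply Rmult_lt_0_compat; [lra|apply Rmin_glb_lt; lra]).
  destruct (HT (Nat.max N N1) e He) as [y [Hy [Hn Hh]]].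
  assert (By := Y_restrict_bounded enum idx Henum theta Y HY (region theta (children ts n)) y Hy).
  set (r := gnorm theta (restrict (region theta (children ts n)) y)).
  assert (Hr : d0 / 2 <= r).
  { assert (H := Hc y r e Hy (norm_le_gnorm _ _ By)
      (head_proj_weaken theta idx N1 (Nat.max N N1) y e ltac:(lia) Hh)).
    apply (proj2 Hn) in H. apply Rmult_le_compat_l with (r := d0) in H; [|lra].
    replace (d0 * ((r + e) / d0)) with (r + e) in H by (field; lra).
    pose proof (Rmin_l 1 d). unfold e in H. nra. }
  exists (fun s => / r * y s). split; [now apply (Y_scale idx theta Y HY)|]. split.
  - rewrite restrict_scale. apply normalized_scale_inv; [exact By|fold r; lra].
  - rewrite head_proj_scale. apply norm_le_weaken with (e / r).
    + apply norm_le_scale_inv; [lra|]. apply head_proj_weaken with (Nat.max N N1); [lia|exact Hh].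
    + apply Rdiv_le_of_le_mult; [lra|]. pose proof (Rmin_r 1 d). unfold e. nra.
Qed.

Lemma children_c0_sequence : c0_sequence_on theta idx Y (region theta (children ts n)) ->
  c0_sequence_on theta idx Y (region theta ts).
Proof.
  intros [z [B [HzY [Hzn [Hzh Hzu]]]]]. destruct Hctrl as [Hd0 Hc].
  destruct (head_null_fast_subsequence theta idx z Hzh N1) as [psi [Hpsi Hfast]].
  set (rho := fun k => gnorm theta (restrict (region theta ts) (z (psi k)))).
  assert (Brho : forall k, norm_bounded theta (restrict (region theta ts) (z (psi k))))
    by (intros k; apply (Y_restrict_bounded enum idx Henum theta Y HY), HzY).
  assert (Hrho : forall k, 1 <= rho k).
  { intros k. rewrite <- (gnorm_normalized _ _ (Hzn (psi k))). apply gnorm_dominated; [|apply Brho].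
    intros s _. apply restrict_subset_abs_le, region_children_sub. }
  assert (Hinv : forall k, 0 < / rho k <= 1).
  { intros k. specialize (Hrho k). split; [apply Rinv_0_lt_compat; lra|].
    rewrite <- Rinv_1. apply Rinv_le_contravar; lra. }
  assert (Habs : forall k, Rabs (/ rho k) <= 1)
    by (intros k; specialize (Hinv k); rewrite Rabs_right; lra).
  exists (fun k s => / rho k * z (psi k) s), ((Rabs B + 1) / d0). split; [|split; [|split]].
  - intros k. apply (Y_scale idx theta Y HY), HzY.
  - intros k. rewrite restrict_scale. apply normalized_scale_inv; [apply Brho|].
    specialize (Hrho k). unfold rho in Hrho. lra.
  - now apply head_null_rescaled_subsequence.
  - intros m a phi Hphi. rewrite (lincomb_rescaled m a (fun k => / rho k) (fun k => z (psi k)) phi).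
    set (b := fun i => a i * / rho (phi i)).
    assert (Hb : maxabsN m b <= maxabsN m a) by (apply maxabsN_scale_le; intros; apply Habs).
    apply norm_le_weaken with ((Rabs B * maxabsN m b + maxabsN m b) / d0).
    + apply Hc.
      * apply (Y_lincomb idx theta Y HY). intros; apply HzY.
      * apply norm_le_weaken with (B * maxabsN m b).
        -- apply Hzu. intros i. apply strictly_increasing_lt; [exact Hpsi|apply Hphi].
        -- apply Rmult_le_compat_r; [apply maxabsN_nonneg|apply Rle_abs].
      * exact (norm_le_head_lincomb_fast theta idx N1 (fun k => z (psi k)) m b phi Hfast Hphi).
    + replace ((Rabs B + 1) / d0 * maxabsN m a) with ((Rabs B + 1) * maxabsN m a / d0) by (field; lra).
      unfold Rdiv. apply Rmult_le_compat_r; [left; apply Rinv_0_lt_compat, Hd0|].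
      pose proof (Rabs_pos B). pose proof (maxabsN_nonneg m b). nra.
Qed.

End Controlled.

Lemma c0_sequence_or_children : antichain ts -> tail_normalizable theta idx Y (region theta ts) ->
  c0_sequence_on theta idx Y (region theta ts) \/
  exists n, tail_normalizable theta idx Y (region theta (children ts n)) /\
    (c0_sequence_on theta idx Y (region theta (children ts n)) ->
     c0_sequence_on theta idx Y (region theta ts)).
Proof.
  intros Hanti HT. destruct (classic (front_negligible idx theta Y ts)) as [Hneg|Hneg].
  - left. now apply (front_negligible_c0_sequence enum idx Henum theta Y HY ts).
  - right. destruct (not_front_negligible_controlled Hneg) as [n [N1 [d0 Hctrl]]].
    exists n. split.
    + now apply (children_tail_normalizable n N1 d0).
    + now apply (children_c0_sequence n N1 d0).
Qed.

End Children.

Section Konig.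
Variable theta : node -> Prop.
Hypothesis Htree : is_tree theta.
Variable T : nat -> list node.
Hypothesis HT0 : T O = [[]].
Hypothesis HTS : forall i, exists n, T (S i) = children (T i) n.
Hypothesis HTne : forall i, exists s, region theta (T i) s.

Lemma levels_antichain i : antichain (T i).
Proof.
  induction i; [rewrite HT0; apply antichain_single|].
  destruct (HTS i) as [n ->]. now apply antichain_children.
Qed.

Lemma levels_region_nested i j s : (i <= j)%nat -> region theta (T j) s -> region theta (T i) s.
Proof.
  intros H. induction H; auto. intros Hr. apply IHle.
  destruct (HTS m) as [n E]. rewrite E in Hr. now apply region_children_sub in Hr.
Qed.

Lemma levels_ancestor i j u : (i <= j)%nat -> In u (T j) -> exists t, In t (T i) /\ prefix t u.
Proof.
  intros H. revert u. induction H; intros u Hu; [exists u; split; auto; apply prefix_refl|].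
  destruct (HTS m) as [n E]. rewrite E in Hu.
  apply in_children in Hu. destruct Hu as [t [c [Ht [_ ->]]]].
  destruct (IHle t Ht) as [t' [Ht' Hp]]. exists t'. split; auto.
  apply prefix_trans with t; [exact Hp|apply prefix_app].
Qed.

Definition live (i : nat) (t : node) : Prop :=
  In t (T i) /\ forall j, (i <= j)%nat -> exists s, region theta (T j) s /\ prefix t s.

Lemma live_root : live O [].
Proof.
  unfold live. rewrite HT0. split; [now left|]. intros j _. destruct (HTne j) as [s Hs].
  exists s. split; [exact Hs|]. now exists s.
Qed.

(* Levels are finitely branching, so by pigeonhole some child stays live. *)
Lemma live_child i t : live i t -> exists c, live (S i) (t ++ [c]).
Proof.
  intros [Hin Hl]. destruct (HTS i) as [n En].
  set (P := fun c j => exists s, region theta (T (j + S i)) s /\ prefix (t ++ [c]) s).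
  destruct (pigeonhole_infinitely_often n P) as [c [Hc Hall]].
  - intros c j j' Hj [s [Hs Hp]]. exists s. split; auto.
    apply levels_region_nested with (j + S i)%nat; auto. lia.
  - intros j. destruct (Hl (j + S i)%nat ltac:(lia)) as [s [Hs Hp]].
    pose proof Hs as [Hth [u [Hu Hus]]].
    destruct (levels_ancestor (S i) (j + S i)%nat u ltac:(lia) Hu) as [v [Hv Hvu]].
    rewrite En in Hv. apply in_children in Hv. destruct Hv as [t0 [c [Ht0 [Hc ->]]]].
    assert (Hp0 : prefix (t0 ++ [c]) s) by (apply prefix_trans with u; auto).
    assert (t0 = t) as ->.
    { apply (antichain_prefix_eq (T i) t0 t s (levels_antichain i)); auto.
      apply prefix_trans with (t0 ++ [c]); [apply prefix_app|exact Hp0]. }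
    exists c. split; [exact Hc|]. exists s. auto.
  - exists c. split; [rewrite En; apply in_children; exists t, c; auto|].
    intros j Hj. destruct (Hall (j - S i)%nat) as [s [Hs Hp]]. exists s. split; auto.
    now replace j with (j - S i + S i)%nat by lia.
Qed.

Lemma levels_infinite_branch : exists sigma : nat -> nat, forall n, theta (map sigma (seq 0 n)).
Proof.
  destruct (dependent_choice live (fun _ t t' => exists c, t' = t ++ [c]) [] live_root) as [f [Hf0 Hf]].
  { intros i t Ht. destruct (live_child i t Ht) as [c Hc]. exists (t ++ [c]). eauto. }
  exists (fun i => last (f (S i)) O). intros n.
  assert (E : map (fun i => last (f (S i)) O) (seq 0 n) = f n).
  { induction n; [now rewrite Hf0|].
    rewrite seq_S, map_app, IHn. simpl. destruct (Hf n) as [_ [c ->]]. now rewrite last_last. }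
  rewrite E. destruct (Hf n) as [[_ Hl] _]. destruct (Hl n (le_n n)) as [s [[Hs _] Hp]].
  now apply Htree with s.
Qed.

End Konig.

Section WellFounded.
Variable enum : nat -> node.
Variable idx : node -> nat.
Hypothesis Henum : compatible_enum enum idx.
Variable theta : node -> Prop.
Hypothesis Htree : is_tree theta.
Hypothesis Hwf : well_founded_tree theta.
Variable Y : vec -> Prop.
Hypothesis HY : closed_subspace theta idx Y.

Definition bad (ts : list node) : Prop := antichain ts /\
  tail_normalizable theta idx Y (region theta ts) /\ ~ c0_sequence_on theta idx Y (region theta ts).

Lemma bad_children ts : bad ts -> exists n, bad (children ts n).
Proof.
  intros [Hanti [HT Hn]].
  destruct (c0_sequence_or_children enum idx Henum theta Y HY ts Hanti HT) as [C|[n [HTn Hup]]];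
    [contradiction|].
  exists n. split; [now apply antichain_children|]. split; auto.
Qed.

Lemma tail_normalizable_inhabited Rg : tail_normalizable theta idx Y Rg -> exists s, Rg s.
Proof.
  intros H. destruct (H O 1 ltac:(lra)) as [y [_ [[_ Hge] _]]].
  apply NNPP. intros Hn. enough (1 <= 0) by lra. apply Hge.
  apply norm_le_dominated with (fun _ => 0); [|apply norm_le_zero; lra].
  intros s _. rewrite restrict_out; [lra|]. intros Hs. apply Hn. now exists s.
Qed.

Lemma c0_sequence_at_root : tail_normalizable theta idx Y (region theta [[]]) ->
  c0_sequence_on theta idx Y (region theta [[]]).
Proof.
  intros H0. apply NNPP. intros Hn.
  destruct (dependent_choice (fun _ => bad) (fun _ ts ts' => exists n, ts' = children ts n) [[]])
    as [T [HT0 HT]].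
  - split; [apply antichain_single|]. auto.
  - intros i ts Hb. destruct (bad_children ts Hb) as [n Hbn]. exists (children ts n). eauto.
  - apply Hwf, (levels_infinite_branch theta Htree T HT0).
    + intros i. destruct (HT i) as [_ [n E]]. now exists n.
    + intros i. apply tail_normalizable_inhabited, (HT i).
Qed.

End WellFounded.

Definition skip (i0 i : nat) : nat := if Nat.ltb i i0 then i else S i.

Definition insert_at (i0 : nat) (c : R) (b : nat -> R) (k : nat) : R :=
  if Nat.eq_dec k i0 then c else if Nat.ltb k i0 then b k else b (k - 1)%nat.

Lemma insert_at_skip i0 c b i : insert_at i0 c b (skip i0 i) = b i.
Proof.
  unfold insert_at, skip. destruct (Nat.ltb i i0) eqn:E.
  - apply Nat.ltb_lt in E. destruct (Nat.eq_dec i i0); [lia|]. now rewrite (proj2 (Nat.ltb_lt i i0)).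
  - apply Nat.ltb_ge in E. destruct (Nat.eq_dec (S i) i0); [lia|].
    rewrite (proj2 (Nat.ltb_ge (S i) i0)) by lia. f_equal. lia.
Qed.

Lemma sumN_skip n i0 h : (i0 <= n)%nat -> sumN (S n) h = h i0 + sumN n (fun i => h (skip i0 i)).
Proof.
  induction n; intros H.
  - assert (i0 = O) by lia. subst. simpl. lra.
  - change (sumN (S (S n)) h) with (sumN (S n) h + h (S n)).
    destruct (Nat.eq_dec i0 (S n)) as [->|Hne].
    + rewrite (sumN_ext (S n) (fun i => h (skip (S n) i)) h); [lra|].
      intros i Hi. unfold skip. now rewrite (proj2 (Nat.ltb_lt i (S n))).
    + rewrite IHn by lia. simpl.
      replace (skip i0 n) with (S n) by (unfold skip; now rewrite (proj2 (Nat.ltb_ge n i0)) by lia).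
      lra.
Qed.

Lemma homogeneous_system_nontrivial m : forall n (f : nat -> nat -> R), (m < n)%nat ->
  exists a : nat -> R, (exists i, (i < n)%nat /\ a i <> 0) /\
    forall j, (j < m)%nat -> sumN n (fun i => a i * f i j) = 0.
Proof.
  induction m as [|m IH]; intros n f Hn.
  - exists (fun _ => 1). split; [exists O; split; [lia|lra]|]. intros; lia.
  - destruct (classic (exists i0, (i0 < n)%nat /\ f i0 m <> 0)) as [[i0 [Hi0 Hf]]|Hno].
    + destruct n as [|n]; [lia|].
      set (g := fun i j => f (skip i0 i) j - f (skip i0 i) m / f i0 m * f i0 j).
      destruct (IH n g ltac:(lia)) as [b [[i1 [Hi1 Hb]] Hsum]].
      set (c := - sumN n (fun i => b i * (f (skip i0 i) m / f i0 m))).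
      exists (insert_at i0 c b). split.
      * exists (skip i0 i1). split; [unfold skip; destruct Nat.ltb; lia|]. now rewrite insert_at_skip.
      * intros j Hj. rewrite (sumN_skip n i0) by lia.
        rewrite (sumN_ext n _ (fun i => b i * g i j + f i0 j * (b i * (f (skip i0 i) m / f i0 m))))
          by (intros; rewrite insert_at_skip; unfold g; ring).
        rewrite sumN_plus, sumN_scal.
        unfold insert_at. destruct (Nat.eq_dec i0 i0) as [_|]; [|congruence]. unfold c.
        destruct (Nat.eq_dec j m) as [->|Hjm].
        -- rewrite (sumN_ext n (fun i => b i * g i m) (fun _ => 0)), sumN_zero; [ring|].
           intros i _. unfold g. field. exact Hf.
        -- rewrite Hsum by lia. ring.
    + destruct (IH n f ltac:(lia)) as [a [Ha Hs]]. exists a. split; auto.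
      intros j Hj. destruct (Nat.eq_dec j m) as [->|Hjm]; [|apply Hs; lia].
      rewrite (sumN_ext _ _ (fun _ => 0)); [apply sumN_zero|].
      intros i Hi. assert (f i m = 0) by (apply NNPP; intros C; apply Hno; exists i; auto).
      rewrite H. ring.
Qed.

Section Root.
Variable enum : nat -> node.
Variable idx : node -> nat.
Hypothesis Henum : compatible_enum enum idx.
Variable theta : node -> Prop.
Variable Y : vec -> Prop.
Hypothesis HY : closed_subspace theta idx Y.

Lemma restrict_root y : Y y -> restrict (region theta [[]]) y = y.
Proof.
  intros Hy. apply functional_extensionality. intros s.
  destruct (classic (theta s)) as [Hs|Hs].
  - apply restrict_in. split; [exact Hs|]. exists []. split; [now left|]. now exists s.
  - rewrite restrict_out by (intros [? _]; contradiction).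
    symmetry. now apply (Y_support idx theta Y HY).
Qed.

(* A nonzero vector of [Y] vanishing on [s_0, ..., s_(N-1)] exists by dimension count. *)
Lemma root_tail_normalizable : infinite_dimensional Y ->
  tail_normalizable theta idx Y (region theta [[]]).
Proof.
  intros Hinf N d Hd. destruct (Hinf (S N)) as [v [Hv Hind]].
  destruct (homogeneous_system_nontrivial N (S N) (fun i j => v i (enum j)) ltac:(lia))
    as [a [[i [Hi Ha]] Hs]].
  set (y := lincomb (S N) a v).
  assert (Hy : Y y) by (apply (Y_lincomb idx theta Y HY); auto).
  assert (Hhead : forall s, (idx s < N)%nat -> y s = 0).
  { intros s Hs0. unfold y, lincomb. rewrite <- (enum_idx enum idx Henum s). now apply Hs. }
  assert (Hne : exists s, y s <> 0).
  { apply NNPP. intros C. apply Ha. apply (Hind a); auto. intros s.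
    apply NNPP. intros C2. apply C. now exists s. }
  destruct Hne as [s Hs0].
  assert (Hth : theta s) by (apply NNPP; intros C; now apply Hs0, (Y_support idx theta Y HY)).
  assert (By : norm_bounded theta y) by exact (Y_bounded enum idx Henum theta Y HY y Hy).
  assert (Hr : 0 < gnorm theta y).
  { pose proof (norm_le_gnorm theta y By [s] (is_chain_single theta s Hth)) as H.
    simpl in H. pose proof (Rabs_pos_lt _ Hs0). lra. }
  exists (fun s => / gnorm theta y * y s). split; [now apply (Y_scale idx theta Y HY)|]. split.
  - rewrite restrict_root by now apply (Y_scale idx theta Y HY). now apply normalized_scale_inv.
  - apply norm_le_dominated with (fun _ => 0); [|apply norm_le_zero; lra].
    intros s' _. unfold head_proj. destruct (Nat.ltb (idx s') N) eqn:E; [|lra].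
    apply Nat.ltb_lt in E. rewrite Hhead by exact E. rewrite Rmult_0_r. lra.
Qed.

End Root.

Definition eta (i : nat) : R := (/2) ^ (i + 5).

Lemma eta_pos i : 0 < eta i.
Proof. apply half_pow_pos. Qed.

Lemma eta_le i : eta i <= / 32.
Proof. unfold eta. apply Rle_trans with ((/2) ^ 5); [apply half_pow_le; lia|]. simpl. lra. Qed.

Lemma eta_lt i : eta i < / 2 ^ (i + 2).
Proof.
  rewrite <- pow_inv. unfold eta. replace (i + 5)%nat with ((i + 2) + 3)%nat by lia.
  rewrite pow_add. pose proof (half_pow_pos (i + 2)). simpl. nra.
Qed.

Lemma sumN_eta n : sumN n eta <= / 16.
Proof.
  rewrite (sumN_ext n eta (fun i => / 16 * (/2) ^ (S i))).
  - rewrite sumN_scal, sumN_half_pow. pose proof (half_pow_pos n). lra.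
  - intros i _. unfold eta. replace (i + 5)%nat with (S i + 4)%nat by lia. rewrite pow_add. simpl. field.
Qed.

Definition sgn (r : R) : R := if Rle_dec 0 r then 1 else -1.

Definition sign_functional (x : vec) (l : list node) : list (R * node) :=
  map (fun s => (sgn (x s), s)) l.

Lemma gapply_cons p g x : gapply (p :: g) x = fst p * x (snd p) + gapply g x.
Proof. reflexivity. Qed.

Lemma gapply_sign_functional x l : gapply (sign_functional x l) x = chain_sum x l.
Proof.
  unfold sign_functional. induction l as [|a l IH]; [reflexivity|].
  simpl map. rewrite gapply_cons, chain_sum_cons, IH.
  simpl. unfold sgn. destruct Rle_dec; [rewrite Rabs_right by lra|rewrite Rabs_left by lra]; ring.
Qed.

Lemma in_G_sign_functional theta x l : is_chain theta l -> in_G theta (sign_functional x l).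
Proof.
  intros Hl. split.
  - unfold sign_functional. rewrite map_map. simpl. now rewrite map_id.
  - apply Forall_forall. intros p Hp. apply in_map_iff in Hp. destruct Hp as [s [<- _]].
    simpl. unfold sgn. destruct Rle_dec; [apply Rabs_R1|]. rewrite Rabs_left by lra. ring.
Qed.

Lemma gapply_abs_le g x : Forall (fun p => Rabs (fst p) = 1) g ->
  Rabs (gapply g x) <= chain_sum x (map snd g).
Proof.
  induction g as [|p g IH]; intros H; [simpl; rewrite Rabs_R0; lra|].
  inversion H as [|? ? Hp Hg]; subst. rewrite gapply_cons. simpl map. rewrite chain_sum_cons.
  eapply Rle_trans; [apply Rabs_triang|]. rewrite Rabs_mult, Hp. specialize (IH Hg). lra.
Qed.

Lemma gapply_le_norm theta g x M : in_G theta g -> norm_le theta x M -> Rabs (gapply g x) <= M.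
Proof.
  intros [Hc Hg] H. eapply Rle_trans; [now apply gapply_abs_le|]. now apply H.
Qed.

Lemma gapply_lincomb g n a v : gapply g (lincomb n a v) = sumN n (fun i => a i * gapply g (v i)).
Proof.
  induction g as [|p g IH].
  - simpl. symmetry. rewrite (sumN_ext _ _ (fun _ => 0)); [apply sumN_zero|]. intros; ring.
  - rewrite gapply_cons, IH. unfold lincomb. rewrite <- sumN_scal, <- sumN_plus.
    apply sumN_ext. intros. rewrite gapply_cons. ring.
Qed.

Lemma c0_lower_estimate theta (u : nat -> vec) (g : nat -> list (R * node)) :
  (forall i, in_G theta (g i)) -> (forall i, 1 - 3 * eta i < gapply (g i) (u i)) ->
  (forall i k, i <> k -> Rabs (gapply (g i) (u k)) <= eta k) ->
  forall n a, norm_ge theta (lincomb n a u) (/ 2 * maxabsN n a).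
Proof.
  intros HG Hii Hik n a M HM. destruct n as [|n]; [simpl; pose proof (norm_le_nonneg _ _ _ HM); lra|].
  set (m := maxabsN (S n) a). assert (Hm : 0 <= m) by apply maxabsN_nonneg.
  destruct (maxabsN_attained (S n) a ltac:(lia)) as [j [Hj Ej]].
  assert (Hx := gapply_le_norm theta (g j) _ M (HG j) HM).
  rewrite gapply_lincomb, (sumN_split (S n) j) in Hx by exact Hj.
  set (rest := sumN (S n) (fun i => if Nat.eq_dec i j then 0 else a i * gapply (g j) (u i))) in Hx.
  assert (Hrest : Rabs rest <= m * / 16).
  { unfold rest. eapply Rle_trans; [apply sumN_abs|].
    apply Rle_trans with (sumN (S n) (fun i => m * eta i)).
    - apply sumN_le. intros i Hi. destruct (Nat.eq_dec i j).
      + rewrite Rabs_R0. pose proof (eta_pos i). nra.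
      + rewrite Rabs_mult. apply Rmult_le_compat; try apply Rabs_pos; [now apply maxabsN_ge|].
        apply Hik. auto.
    - rewrite sumN_scal. pose proof (sumN_eta (S n)). nra. }
  assert (Hjj := Hii j). pose proof (eta_le j).
  assert (Hmain : m * (1 - 3 / 32) <= Rabs (a j * gapply (g j) (u j))).
  { rewrite Rabs_mult, Ej, (Rabs_right (gapply (g j) (u j))) by lra.
    fold m. apply Rmult_le_compat_l; lra. }
  pose proof (Rabs_triang (a j * gapply (g j) (u j) + rest) (- rest)) as Htri.
  rewrite Rabs_Ropp in Htri.
  replace (a j * gapply (g j) (u j) + rest + - rest) with (a j * gapply (g j) (u j)) in Htri by ring.
  fold m. lra.
Qed.

Lemma equiv_c0_of_functionals theta (u : nat -> vec) (g : nat -> list (R * node)) B :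
  (forall i, in_G theta (g i)) -> (forall i, 1 - 3 * eta i < gapply (g i) (u i)) ->
  (forall i k, i <> k -> Rabs (gapply (g i) (u k)) <= eta k) ->
  (forall n a, norm_le theta (lincomb n a u) (B * maxabsN n a)) -> equiv_c0_basis theta u.
Proof.
  intros HG Hii Hik Hup. exists (/ 2), (Rabs B + 1). split; [lra|].
  split; [pose proof (Rabs_pos B); lra|]. intros n a.
  split; [now apply (c0_lower_estimate theta u g)|].
  apply norm_le_weaken with (B * maxabsN n a); [apply Hup|].
  apply Rmult_le_compat_r; [apply maxabsN_nonneg|]. pose proof (Rle_abs B). lra.
Qed.

Lemma hump_blocks theta idx (z : nat -> vec) : head_null theta idx z ->
  (forall k, in_YG theta idx (z k)) ->
  exists (kk L : nat -> nat), strictly_increasing kk /\ forall i, (L i <= L (S i))%nat /\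
    norm_le theta (head_proj idx (L i) (z (kk i))) (eta i) /\
    norm_le theta (tail_proj idx (L (S i)) (z (kk i))) (eta i).
Proof.
  intros Hhead Htail.
  destruct (dependent_choice (fun _ _ => True) (fun i (p p' : nat * nat) =>
    (fst p < fst p')%nat /\ norm_le theta (head_proj idx (snd p) (z (fst p'))) (eta i) /\
    (snd p <= snd p')%nat /\ norm_le theta (tail_proj idx (snd p') (z (fst p'))) (eta i)) (O, O))
    as [f [_ Hf]]; [exact I| |].
  - intros i [k M] _. destruct (Hhead M (eta i) (eta_pos i)) as [K HK].
    destruct (proj2 (Htail (Nat.max K (S k))) (eta i) (eta_pos i)) as [M' HM'].
    exists (Nat.max K (S k), Nat.max M M'). simpl. split; [exact I|].
    split; [lia|]. split; [apply HK; lia|]. split; [lia|]. apply HM'. lia.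
  - exists (fun i => fst (f (S i))), (fun i => snd (f i)). split; [intros i; apply (Hf (S i))|].
    intros i. destruct (Hf i) as [_ [_ [H1 [H2 H3]]]]. auto.
Qed.

Section HumpFunctionals.
Variable theta : node -> Prop.
Variable idx : node -> nat.
Variables (u : nat -> vec) (L : nat -> nat).
Hypothesis HL : forall i, (L i <= L (S i))%nat.
Hypothesis Hhead : forall i, norm_le theta (head_proj idx (L i) (u i)) (eta i).
Hypothesis Htail : forall i, norm_le theta (tail_proj idx (L (S i)) (u i)) (eta i).

Lemma blocks_mono i k : (i <= k)%nat -> (L i <= L k)%nat.
Proof. intros H. induction H; [lia|]. specialize (HL m). lia. Qed.

Definition window (i : nat) (s : node) : bool :=
  (Nat.leb (L i) (idx s) && Nat.ltb (idx s) (L (S i)))%bool.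

Definition supported_in_window (i : nat) (g : list (R * node)) : Prop :=
  forall p, In p g -> (L i <= idx (snd p))%nat /\ (idx (snd p) < L (S i))%nat.

Lemma window_functional_exists i : normalized theta (u i) ->
  exists g, in_G theta g /\ supported_in_window i g /\ 1 - 3 * eta i < gapply g (u i).
Proof.
  intros [_ Hge].
  assert (Hl : exists l, is_chain theta l /\ 1 - eta i < chain_sum (u i) l).
  { apply NNPP. intros C. assert (1 <= 1 - eta i); [|pose proof (eta_pos i); lra].
    apply Hge. intros l Hl. apply Rnot_lt_le. intros L'. apply C. now exists l. }
  destruct Hl as [l [Hl Hsum]].
  exists (sign_functional (u i) (filter (window i) l)). split; [|split].
  - now apply in_G_sign_functional, is_chain_filter.
  - intros p Hp. apply in_map_iff in Hp. destruct Hp as [s [<- Hs]]. apply filter_In in Hs.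
    destruct Hs as [_ Hw]. apply andb_prop in Hw. destruct Hw as [H1 H2].
    apply Nat.leb_le in H1. apply Nat.ltb_lt in H2. simpl. lia.
  - rewrite gapply_sign_functional, chain_sum_filter.
    set (hd := head_proj idx (L i) (u i)). set (tl := tail_proj idx (L (S i)) (u i)).
    assert (Habs : forall s, 0 <= Rabs (hd s) + Rabs (tl s))
      by (intros; pose proof (Rabs_pos (hd s)); pose proof (Rabs_pos (tl s)); lra).
    assert (Hwin : chain_sum (u i) l <= chain_sum (fun s => if window i s then u i s else 0) l +
      chain_sum (fun s => Rabs (hd s) + Rabs (tl s)) l).
    { apply chain_sum_triangle. intros s _. rewrite (Rabs_right (Rabs (hd s) + Rabs (tl s)))
        by (apply Rle_ge, Habs).
      unfold hd, tl, window, head_proj, tail_proj.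
      destruct (Nat.leb (L i) (idx s)) eqn:E1; destruct (Nat.ltb (idx s) (L (S i))) eqn:E2;
        destruct (Nat.ltb (idx s) (L i)) eqn:E3; simpl; rewrite ?Rabs_R0;
        pose proof (Rabs_pos (u i s)); try lra.
      apply Nat.leb_gt in E1. apply Nat.ltb_ge in E3. lia. }
    assert (Hht : chain_sum (fun s => Rabs (hd s) + Rabs (tl s)) l <= chain_sum hd l + chain_sum tl l).
    { apply chain_sum_triangle. intros s _. rewrite Rabs_right by (apply Rle_ge, Habs). lra. }
    assert (chain_sum hd l <= eta i) by (apply Hhead, Hl).
    assert (chain_sum tl l <= eta i) by (apply Htail, Hl). lra.
Qed.

Lemma window_functional_small i k g : in_G theta g -> supported_in_window i g -> i <> k ->
  Rabs (gapply g (u k)) <= eta k.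
Proof.
  intros [Hc Hg] Hw Hik. eapply Rle_trans; [now apply gapply_abs_le|].
  assert (Hs : forall s, In s (map snd g) -> (L i <= idx s)%nat /\ (idx s < L (S i))%nat).
  { intros s Hs. apply in_map_iff in Hs. destruct Hs as [p [<- Hp]]. now apply Hw. }
  destruct (Nat.lt_trichotomy i k) as [Lt|[Eq|Gt]]; [|contradiction|].
  - rewrite (chain_sum_ext _ (head_proj idx (L k) (u k))); [now apply Hhead|].
    intros s Hin. destruct (Hs s Hin). pose proof (blocks_mono (S i) k Lt). unfold head_proj.
    now rewrite (proj2 (Nat.ltb_lt (idx s) (L k))) by lia.
  - rewrite (chain_sum_ext _ (tail_proj idx (L (S k)) (u k))); [now apply Htail|].
    intros s Hin. destruct (Hs s Hin). pose proof (blocks_mono (S k) i Gt). unfold tail_proj.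
    now rewrite (proj2 (Nat.ltb_ge (idx s) (L (S k)))) by lia.
Qed.

Lemma window_glt i g g' : supported_in_window i g -> supported_in_window (S i) g' -> glt idx g g'.
Proof. intros Hg Hg' p p' Hp Hp' _ _. apply Hg in Hp. apply Hg' in Hp'. lia. Qed.

End HumpFunctionals.

Theorem lemma5p14 (enum : nat -> node) (idx : node -> nat)
  (Henum : compatible_enum enum idx)
  (theta : node -> Prop) (Htree : is_tree theta) (Hwf : well_founded_tree theta)
  (Y : vec -> Prop) (HY : closed_subspace theta idx Y)
  (Hinf : infinite_dimensional Y) :
  exists (y : nat -> vec) (g : nat -> list (R * node)),
    (forall i, Y (y i)) /\
    (forall i, normalized theta (y i)) /\
    equiv_c0_basis theta y /\
    (forall i, in_G theta (g i)) /\
    (forall i, glt idx (g i) (g (S i))) /\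
    (forall i, gapply (g i) (y i) > 1/2) /\
    (forall i k, i <> k -> Rabs (gapply (g i) (y k)) < / 2 ^ (k + 2)).
Proof.
  destruct (c0_sequence_at_root enum idx Henum theta Htree Hwf Y HY
              (root_tail_normalizable enum idx Henum theta Y HY Hinf))
    as [z [B [HzY [Hzn [Hzh Hzu]]]]].
  assert (Hzn1 : forall k, normalized theta (z k))
    by (intros k; rewrite <- (restrict_root idx theta Y HY (z k) (HzY k)); apply Hzn).
  destruct (hump_blocks theta idx z Hzh (fun k => proj1 HY _ (HzY k))) as [kk [L [Hkk HL]]].
  set (u := fun i => z (kk i)).
  destruct (choice (fun i g => in_G theta g /\ supported_in_window idx L i g /\
                               1 - 3 * eta i < gapply g (u i))) as [g Hg].
  { intros i. apply (window_functional_exists theta idx u L); [apply HL..|apply Hzn1]. }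
  assert (Hsmall : forall i k, i <> k -> Rabs (gapply (g i) (u k)) <= eta k)
    by (intros i k; apply (window_functional_small theta idx u L); try apply HL; apply Hg).
  exists u, g. split; [|split; [|split; [|split; [|split; [|split]]]]].
  - intros i. apply HzY.
  - intros i. apply Hzn1.
  - apply (equiv_c0_of_functionals theta u g B); [apply Hg|apply Hg|exact Hsmall|]. intros n a.
    rewrite <- (restrict_root idx theta Y HY (lincomb n a u)); [apply Hzu, Hkk|].
    apply (Y_lincomb idx theta Y HY). intros; apply HzY.
  - intros i. apply Hg.
  - intros i. apply (window_glt idx L i); apply Hg.
  - intros i. pose proof (proj2 (proj2 (Hg i))). pose proof (eta_le i). lra.
  - intros i k Hik. eapply Rle_lt_trans; [now apply Hsmall|apply eta_lt].
Qed.
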